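(* Let $v$ be the last installed view in the system, i.e., $lastview=v$. If a correct server $s$ requests to change view $v$ to view $v.succ$, then at least a weighted majority of correct servers, including $s$, eventually install $v.succ$.
   Context: System: servers $S=\{s_1,\dots,s_n\}$; reliable links, message passing; asynchronous; crash failures only (a server is correct if it does not crash); at most $f$ servers crash and $2f+1\le n$. Views form a sequence $v_0,v_1,\dots$ with $v_{k+1}=v_k.succ$; $v<w$ means $w$ is obtained from $v$ by applying $succ$ one or more times. Each server $s$ has a current view $s.cview$ (initially $v_0$) and a weight in each view; in every view each server's weight is strictly between $\mathbb{wl}=n/(2(n-f))$ and $\mathbb{wu}=n/(2f)$ and the total weight is at most $n$. A weighted majority for view $v$ is a set of servers whose weights in $v$ sum to more than $n/2$. View changer run by each server $s$ with $s.cview=v$: when a local timeout for $v$ expires it requests the change by sending $\langle\text{change\_view},v.succ\rangle$ to all servers; once it has received or sent change\_view for $v.succ$ it forwards it if not already sent, disables read/write operations, sends $\langle\text{state\_update},(val,ts,cid),v,w\rangle$ to all servers (its register state and weight $w$ in $v$) — at this point it has uninstalled $v$ — waits until it has state\_update messages for view $v$ whose weights sum to more than $n/2$, adopts the value with lexicographically largest $(ts,cid)$, then sets $s.cview\leftarrow v.succ$ (installs $v.succ$) and re-enables read/write operations. A view $v$ is installed in the system once at least one server installs $v$ and every server $s$ satisfies $s.cview\le v$; $lastview$ denotes the last view installed in the system. *)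

From HB Require Import structures.
From mathcomp Require Import all_boot all_order all_algebra.
Set Implicit Arguments. Unset Strict Implicit. Unset Printing Implicit Defensive.
Import Order.TTheory GRing.Theory Num.Theory.
Local Open Scope ring_scope.

(* Views: v_k is represented by k : nat, v.succ = v.+1, v_0 = 0. *)
(* Register state: (val, ts, cid). *)
Definition regst (Val : Type) := (Val * nat * nat)%type.

Definition lex_le (Val : Type) (x y : regst Val) : bool :=
  (x.1.2 < y.1.2)%N || ((x.1.2 == y.1.2) && (x.2 <= y.2)%N).

Inductive msg (Val R : Type) :=
| ChangeView (v : nat)
| StateUpdate (x : regst Val) (v : nat) (wt : R).
Arguments ChangeView {Val R} v.
Arguments StateUpdate {Val R} x v wt.

Record lstate (Val : Type) := LState {
  cview   : nat;
  reg     : regst Val;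
  sentcv  : nat -> bool;
  uninst  : bool;         (* has uninstalled cview (sent state_update);
                             read/write operations disabled *)
  crashed : bool }.
Arguments LState {Val} cview reg sentcv uninst crashed.

Record gstate (Val R : Type) (n : nat) := GState {
  loc  : 'I_n -> lstate Val;
  (* net p q m : message m has been sent by p to q *)
  net  : 'I_n -> 'I_n -> msg Val R -> Prop;
  (* rcvd q p m : q has received message m from p *)
  rcvd : 'I_n -> 'I_n -> msg Val R -> Prop }.
Arguments GState {Val R n} loc net rcvd.

Inductive label (n : nat) :=
| Timeout of 'I_n     (* local timeout for cview expires: request change *)
| Uninstall of 'I_n
| Install of 'I_n
| Op of 'I_n          (* abstract read/write operation touching the register *)
| Deliver of 'I_n & 'I_n   (* Deliver q p : deliver some message from p to q *)
| Crash of 'I_n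
| Skip.

Section Model.
Variables (R : realFieldType) (Val : Type) (val0 : Val) (n f : nat).
Variable w : nat -> 'I_n -> R.   (* w v i : weight of server i in view v *)

Local Notation gst := (gstate Val R n).

Definition init_state : gst :=
  GState (fun _ => LState 0%N (val0, 0%N, 0%N) (fun _ => false) false false)
         (fun _ _ _ => False) (fun _ _ _ => False).

Definition upd_loc (g : gst) (s : 'I_n) (ls : lstate Val) : 'I_n -> lstate Val :=
  fun i => if i == s then ls else loc g i.

Definition send_all (N : 'I_n -> 'I_n -> msg Val R -> Prop) (s : 'I_n)
  (m : msg Val R) : 'I_n -> 'I_n -> msg Val R -> Prop :=
  fun p q x => N p q x \/ (p = s /\ x = m).

Definition step (g : gst) (l : label n) (g' : gst) : Prop :=
  match l with
  | Timeout s =>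
      let ls := loc g s in
      ~~ crashed ls /\ ~~ sentcv ls (cview ls).+1 /\
      g' = GState (upd_loc g s (LState (cview ls) (reg ls)
                     (fun k => (k == (cview ls).+1) || sentcv ls k)
                     (uninst ls) (crashed ls)))
                  (send_all (net g) s (ChangeView (cview ls).+1))
                  (rcvd g)
  | Uninstall s =>
      let ls := loc g s in
      ~~ crashed ls /\ ~~ uninst ls /\
      (sentcv ls (cview ls).+1 \/ exists p, rcvd g s p (ChangeView (cview ls).+1)) /\
      g' = GState (upd_loc g s (LState (cview ls) (reg ls)
                     (fun k => (k == (cview ls).+1) || sentcv ls k)
                     true (crashed ls)))
                  (send_all (send_all (net g) s (ChangeView (cview ls).+1)) s
                     (StateUpdate (reg ls) (cview ls) (w (cview ls) s)))
                  (rcvd g)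
  | Install s =>
      let ls := loc g s in
      ~~ crashed ls /\ uninst ls /\
      exists (Q : {set 'I_n}) (ws : 'I_n -> R) (x : regst Val),
        (forall i, i \in Q -> exists y, rcvd g s i (StateUpdate y (cview ls) (ws i))) /\
        n%:R / 2 < \sum_(i in Q) ws i /\
        (exists i, i \in Q /\ rcvd g s i (StateUpdate x (cview ls) (ws i))) /\
        (forall i y, i \in Q -> rcvd g s i (StateUpdate y (cview ls) (ws i)) ->
           lex_le y x) /\
        g' = GState (upd_loc g s (LState (cview ls).+1 x (sentcv ls) false (crashed ls)))
                    (net g) (rcvd g)
  | Op s =>
      let ls := loc g s in
      ~~ crashed ls /\ ~~ uninst ls /\
      exists x : regst Val,
        g' = GState (upd_loc g s (LState (cview ls) x (sentcv ls) (uninst ls) (crashed ls)))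
                    (net g) (rcvd g)
  | Deliver q p =>
      ~~ crashed (loc g q) /\
      exists m, net g p q m /\ ~ rcvd g q p m /\
        g' = GState (loc g) (net g)
               (fun q' p' m' => rcvd g q' p' m' \/ (q' = q /\ p' = p /\ m' = m))
  | Crash s =>
      let ls := loc g s in
      ~~ crashed ls /\
      g' = GState (upd_loc g s (LState (cview ls) (reg ls) (sentcv ls) (uninst ls) true))
                  (net g) (rcvd g)
  | Skip => g' = g
  end.

Definition enabled (g : gst) (l : label n) : Prop := exists g', step g l g'.

Definition correct (r : nat -> gst) (s : 'I_n) : Prop :=
  forall t, ~~ crashed (loc (r t) s).

Definition admissible_run (r : nat -> gst) (lab : nat -> label n) : Prop :=
  r 0%N = init_state /\
  (forall t, step (r t) (lab t) (r t.+1)) /\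
  (forall t, (#|[set i | crashed (loc (r t) i)]| <= f)%N) /\
  (forall t p q m, correct r q -> net (r t) p q m -> exists t', rcvd (r t') q p m) /\
  (forall s, correct r s -> forall t,
     (forall t', (t <= t')%N -> enabled (r t') (Uninstall s)) ->
     exists t', (t <= t')%N /\ lab t' = Uninstall s) /\
  (forall s, correct r s -> forall t,
     (forall t', (t <= t')%N -> enabled (r t') (Install s)) ->
     exists t', (t <= t')%N /\ lab t' = Install s).

(* weight constraints: wl < w v i < wu with wl = n/(2(n-f)), wu = n/(2f),
   written multiplicatively; total weight at most n *)
Definition weights_ok : Prop :=
  (forall v i, n%:R < w v i * (2 * (n - f))%:R /\ w v i * (2 * f)%:R < n%:R) /\
  (forall v, \sum_(i < n) w v i <= n%:R).

Definition weighted_majority (v : nat) (Q : {set 'I_n}) : Prop :=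
  n%:R / 2 < \sum_(i in Q) w v i.

Definition installed_in_system (g : gst) (v : nat) : Prop :=
  (exists s, cview (loc g s) = v) /\ (forall s, (cview (loc g s) <= v)%N).

(* lastview = v : the last view installed in the system (unique when it exists) *)
Definition lastview_is (g : gst) (v : nat) : Prop := installed_in_system g v.

Definition requests (r : nat -> gst) (lab : nat -> label n) (t : nat)
  (s : 'I_n) (v : nat) : Prop :=
  lab t = Timeout s /\ cview (loc (r t) s) = v.

End Model.

(* Every correct server eventually installs every view up to v.succ, by
   induction on the view k. For k < v a server already in view v has sent
   change_view for k.succ, and for k = v the requesting server s has. By
   reliable links each correct server receives it, so by weak fairness it
   uninstalls k and sends its state update for k to all servers. At most f
   servers crash and every weight exceeds n/(2(n-f)), so the correct servers
   form a weighted majority in every view; hence each correct server eventually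
   holds a quorum of state updates for k and installs k.succ. Views grow one at
   a time, so each correct server passes through v.succ after the request. *)

From HB Require Import structures.
From mathcomp Require Import all_boot all_order all_algebra.
From mathcomp Require Import boolp zify lra.
Import Order.TTheory GRing.Theory Num.Theory.
Local Open Scope ring_scope.

Lemma lex_le_total (Val : Type) : total (@lex_le Val).
Proof. move=> x y; rewrite /lex_le; lia. Qed.

Lemma lex_le_trans (Val : Type) : transitive (@lex_le Val).
Proof. move=> y x z; rewrite /lex_le; lia. Qed.

Lemma exists_rel_max (I : eqType) (T : Type) (le : rel T) (P : I -> T -> Prop)
    (s : seq I) :
  total le -> transitive le -> s != [::] ->
  (forall i, i \in s -> exists y, P i y) ->
  (forall i y y', P i y -> P i y' -> y = y') ->
  exists x, (exists i, i \in s /\ P i x) /\ forall i y, i \in s -> P i y -> le y x.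
Proof.
move=> le_total le_trans; have le_refl z : le z z by have := le_total z z; rewrite orbb.
elim: s => [//|i s IH] _ exP funP.
have [yi Pi] := exP i (mem_head _ _).
have [->|s_ne] := eqVneq s [::].
  exists yi; split; first by exists i; rewrite mem_head.
  by move=> j y; rewrite mem_seq1 => /eqP-> /funP/(_ Pi)->.
have [j|x [[j [js Px]] x_max]] := IH s_ne _ funP.
  by move=> js; apply: exP; rewrite inE js orbT.
case/orP: (le_total yi x) => [le_yx|le_xy].
  exists x; split; first by exists j; rewrite inE js orbT.
  by move=> k y /predU1P[-> /funP/(_ Pi)->|ks /(x_max _ _ ks)].
exists yi; split; first by exists i; rewrite mem_head.
move=> k y /predU1P[-> /funP/(_ Pi)->|ks /(x_max _ _ ks) le_ykx] //.
exact: le_trans le_xy.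
Qed.

Lemma eventually_forall (I : finType) (C : I -> Prop) (P : I -> nat -> Prop) :
  (forall i t t', (t <= t')%N -> P i t -> P i t') ->
  (forall i, C i -> exists t, P i t) -> exists t, forall i, C i -> P i t.
Proof.
move=> P_mono evP.
have /fin_all_exists[T PT] i : exists t, C i -> P i t.
  have [/evP[t Pt]|nCi] := pselect (C i); first by exists t.
  by exists 0%N => /nCi.
by exists (\max_i T i) => i Ci; apply: P_mono (leq_bigmax i) (PT i Ci).
Qed.

Lemma nat_succ_hit (u : nat -> nat) a b v :
  (forall t, u t.+1 <= (u t).+1)%N -> (a <= b)%N -> (u a <= v < u b)%N ->
  exists t, (a <= t)%N /\ u t = v.+1.
Proof.
move=> u_step; elim: b => [|b IH]; first by rewrite leqn0 => /eqP->; lia.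
rewrite leq_eqVlt => /predU1P[->|ab]; first lia.
case: (ltnP v (u b)) => [vb|bv] /andP[av vb1]; first by apply: IH; rewrite ?av.
by exists b.+1; split; [exact: ltnW | have := u_step b; lia].
Qed.

Lemma homo_leq_impl (P : nat -> Prop) :
  (forall t, P t -> P t.+1) -> forall t t', (t <= t')%N -> P t -> P t'.
Proof.
by move=> PS; apply: homo_leq (fun A B : Prop => A -> B) _ _ PS => // ? ? ? f g /f.
Qed.

Lemma weighted_majority_of_card (R : realFieldType) (n f : nat) (w : nat -> 'I_n -> R)
    k (Q : {set 'I_n}) :
  (f < n)%N -> (forall i, n%:R < w k i * (2 * (n - f))%:R) -> (n - f <= #|Q|)%N ->
  weighted_majority w k Q.
Proof.
move=> fn w_lb QS; rewrite /weighted_majority.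
have nf_gt0 : (0 < n - f)%N by rewrite subn_gt0.
have [i0 i0Q] : exists i0, i0 \in Q by apply/card_gt0P; apply: leq_trans nf_gt0 QS.
have sum_lb : n%:R *+ #|Q| < (\sum_(i in Q) w k i) * (2 * (n - f))%:R.
  rewrite -sumr_const mulr_suml; apply: ltr_sum => [|i _]; last exact: w_lb.
  by apply/hasP; exists i0; rewrite ?mem_index_enum.
have card_lb : (n - f)%:R <= #|Q|%:R :> R by rewrite ler_nat.
have nf_pos : 0 < (n - f)%:R :> R by rewrite ltr0n.
have n_ge0 : 0 <= n%:R :> R by [].
rewrite -mulr_natr natrM in sum_lb; nra.
Qed.

Section ViewChanger.
Set Implicit Arguments.
Unset Strict Implicit.
Variables (R : realFieldType) (Val : Type) (n : nat) (w : nat -> 'I_n -> R).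
Local Notation gst := (gstate Val R n).

(* A server has uninstalled view [k] once it has sent its state update for [k];
   this remains true after it moves on to later views. *)
Definition uninstalled (ls : lstate Val) (k : nat) : Prop :=
  (k < cview ls)%N \/ k = cview ls /\ uninst ls.

Record view_inv (g : gst) : Prop := ViewInv {
  state_update_sent : forall p k, uninstalled (loc g p) k ->
    exists y, forall q, net g p q (StateUpdate y k (w k p));
  change_view_sent : forall p k, uninstalled (loc g p) k ->
    forall q, net g p q (ChangeView k.+1);
  state_update_uninstalled : forall p q y k wt,
    net g p q (StateUpdate y k wt) -> uninstalled (loc g p) k;
  state_update_functional : forall p q q' y y' k wt wt',
    net g p q (StateUpdate y k wt) -> net g p q' (StateUpdate y' k wt') -> y = y';
  rcvd_sent : forall q p m, rcvd g q p m -> net g p q m }.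

Lemma view_inv_init (val0 : Val) : view_inv (init_state R val0 n).
Proof. by split=> //= p k [|[]]. Qed.

Lemma view_inv_frame (g g' : gst) :
  view_inv g ->
  (forall p k, uninstalled (loc g' p) k <-> uninstalled (loc g p) k) ->
  (forall p q m, net g p q m -> net g' p q m) ->
  (forall p q y k wt, net g' p q (StateUpdate y k wt) -> net g p q (StateUpdate y k wt)) ->
  (forall q p m, rcvd g' q p m -> rcvd g q p m \/ net g p q m) ->
  view_inv g'.
Proof.
move=> [su cv suu suf rs] eqU netS netSU rcvdS; split.
- by move=> p k /eqU /su [y Hy]; exists y => q; apply/netS.
- by move=> p k /eqU /cv Hc q; apply/netS.
- by move=> p q y k wt /netSU /suu /eqU.
- by move=> p q q' y y' k wt wt' /netSU + /netSU; apply: suf.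
- by move=> q p m /rcvdS [/rs /netS | /netS].
Qed.

Lemma uninstalled_upd_loc (g : gst) s ls :
  (forall k, uninstalled ls k <-> uninstalled (loc g s) k) ->
  forall p k, uninstalled (upd_loc g s ls p) k <-> uninstalled (loc g p) k.
Proof. by move=> eqU p k; rewrite /upd_loc; case: eqP => [->|]. Qed.

Lemma uninstalled_install (ls : lstate Val) x sent cr : uninst ls ->
  forall k, uninstalled (LState (cview ls).+1 x sent false cr) k <-> uninstalled ls k.
Proof. by rewrite /uninstalled /= => -> k; rewrite ltnS leq_eqVlt; split; lia. Qed.

Lemma view_inv_uninstall (g : gst) s sent :
  view_inv g -> ~~ uninst (loc g s) ->
  view_inv (GState
    (upd_loc g s (LState (cview (loc g s)) (reg (loc g s)) sent true (crashed (loc g s))))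
    (send_all (send_all (net g) s (ChangeView (cview (loc g s)).+1)) s
       (StateUpdate (reg (loc g s)) (cview (loc g s)) (w (cview (loc g s)) s)))
    (rcvd g)).
Proof.
move=> [su cv suu suf rs] un_s; set c := cview (loc g s).
have eqU p k : uninstalled (upd_loc g s (LState c (reg (loc g s)) sent true
    (crashed (loc g s))) p) k <-> uninstalled (loc g p) k \/ p = s /\ k = c.
  rewrite /upd_loc /uninstalled; case: eqP => [->|ps] /=.
    rewrite -/c (negbTE un_s).
    split=> [[kc|[-> _]]|[[kc|[_ //]]|[_ ->]]]; by [left; left | left | right].
  by split=> [|[|[]]] //; left.
split.
- move=> p k /eqU [/su [y Hy]|[-> ->]]; last by exists (reg (loc g s)) => q; right.
  by exists y => q; left; left.
- by move=> p k /eqU [/cv Hc q|[-> -> q]]; [left; left | left; right].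
- move=> p q y k wt [[/suu Hu|[_ //]]|[-> [] _ -> _]].
  + by apply/(iffRL (eqU _ _)); left.
  + by apply/(iffRL (eqU _ _)); right.
- have no_prior_su q y wt : ~ net g s q (StateUpdate y c wt).
    by move=> /suu; rewrite /uninstalled ltnn (negbTE un_s) => -[|[]].
  move=> p q q' y y' k wt wt'.
  move=> [[H|[_ //]]|[ps [-> kc _]]] [[H'|[_ //]]|[ps' [-> kc' _]]] //.
  + exact: suf H H'.
  + by move: H; rewrite ps' kc'; move/no_prior_su.
  + by move: H'; rewrite ps kc; move/no_prior_su.
- by move=> q p m /rs; left; left.
Qed.

Lemma view_inv_step (g g' : gst) l : view_inv g -> step w g l g' -> view_inv g'.
Proof.
move=> inv_g; case: l => [s|s|s|s|q p|s|] /=.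
- move=> [_ [_ ->]]; apply: (view_inv_frame inv_g) => //.
  + by apply: uninstalled_upd_loc => k.
  + by move=> *; left.
  + by move=> p q y k wt [|[_ //]].
  + by move=> *; left.
- by move=> [_ [un_s [_ ->]]]; apply: view_inv_uninstall.
- move=> [_ [un_s [? [? [? [_ [_ [_ [_ ->]]]]]]]]].
  apply: (view_inv_frame inv_g) => //; last by move=> *; left.
  exact/uninstalled_upd_loc/uninstalled_install.
- move=> [_ [_ [? ->]]]; apply: (view_inv_frame inv_g) => //; last by move=> *; left.
  by apply: uninstalled_upd_loc => k.
- move=> [_ [m [pqm [_ ->]]]]; apply: (view_inv_frame inv_g) => // q' p' m'.
  by case=> [|[-> [-> ->]]]; [left | right].
- move=> [_ ->]; apply: (view_inv_frame inv_g) => //; last by move=> *; left.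
  by apply: uninstalled_upd_loc => k.
- by move=> ->.
Qed.

Lemma view_inv_run (val0 : Val) (r : nat -> gst) (lab : nat -> label n) :
  r 0%N = init_state R val0 n -> (forall t, step w (r t) (lab t) (r t.+1)) ->
  forall t, view_inv (r t).
Proof.
move=> r0 run_step; elim=> [|t IH]; first by rewrite r0; apply: view_inv_init.
exact: view_inv_step IH (run_step t).
Qed.

Lemma step_mono (g g' : gst) l i : step w g l g' ->
  [/\ (cview (loc g i) <= cview (loc g' i) <= (cview (loc g i)).+1)%N,
      crashed (loc g i) -> crashed (loc g' i),
      (forall k, uninstalled (loc g i) k -> uninstalled (loc g' i) k) &
      forall q p m, rcvd g q p m -> rcvd g' q p m].
Proof.
case: l => [s|s|s|s|q p|s|] /=; last by move=> ->; rewrite leqnn leqnSn.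
- move=> [_ [_ ->]] /=; rewrite /upd_loc; case: eqP => [->|_] /=;
  by rewrite leqnn leqnSn.
- move=> [_ [_ [_ ->]]] /=; rewrite /upd_loc; case: eqP => [->|_] /=;
  rewrite leqnn leqnSn //; split=> // k [|[-> _]]; by [left | right].
- move=> [_ [un_s [? [? [? [_ [_ [_ [_ ->]]]]]]]]] /=; rewrite /upd_loc.
  case: eqP => [->|_] /=; rewrite ?leqnn ?leqnSn ?leqW //.
  by split=> // k; apply: (iffRL (uninstalled_install _ _ _ un_s k)).
- move=> [_ [_ [? ->]]] /=; rewrite /upd_loc; case: eqP => [->|_] /=;
  by rewrite leqnn leqnSn.
- by move=> [_ [m [_ [_ ->]]]] /=; rewrite leqnn leqnSn; split=> // *; left.
- move=> [_ ->] /=; rewrite /upd_loc; case: eqP => [->|_] /=;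
  by rewrite leqnn leqnSn.
Qed.

Lemma uninstall_enabled (g : gst) q p :
  ~~ crashed (loc g q) -> ~~ uninst (loc g q) ->
  rcvd g q p (ChangeView (cview (loc g q)).+1) -> enabled w g (Uninstall q).
Proof. by move=> cq uq rq; eexists; do 3!split=> //; right; exists p. Qed.

Lemma install_enabled (g : gst) q (Q : {set 'I_n}) :
  view_inv g -> ~~ crashed (loc g q) -> uninst (loc g q) ->
  (forall i, i \in Q -> exists y,
     rcvd g q i (StateUpdate y (cview (loc g q)) (w (cview (loc g q)) i))) ->
  weighted_majority w (cview (loc g q)) Q -> enabled w g (Install q).
Proof.
move=> inv_g cq uq su_rcvd maj; set c := cview (loc g q) in su_rcvd maj *.
have Q_ne : enum Q != [::].
  apply/eqP => /(congr1 size); rewrite -cardE => /eqP; rewrite cards_eq0 => /eqP Q0.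
  by move: maj; rewrite /weighted_majority Q0 big_set0 ltNge divr_ge0.
(* Each server sends a single register state per view, so the state to adopt,
   the lexicographically largest one received, exists. *)
pose P i y := rcvd g q i (StateUpdate y c (w c i)).
have P_fun i y y' : P i y -> P i y' -> y = y'.
  by move=> /(rcvd_sent inv_g) + /(rcvd_sent inv_g); apply: state_update_functional.
have [i|x [[j [jQ Px]] x_max]] := @exists_rel_max _ _ _ P _
  (@lex_le_total Val) (@lex_le_trans Val) Q_ne _ P_fun.
  by rewrite mem_enum => /su_rcvd.
eexists; split=> //; split=> //; exists Q, (w c), x; do !split=> //.
- by exists j; rewrite -mem_enum.
- by move=> i y iQ; apply: x_max; rewrite mem_enum.
Qed.

Section Run.
Variables (r : nat -> gst) (lab : nat -> label n).
Hypothesis run_step : forall t, step w (r t) (lab t) (r t.+1).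

Lemma run_cview_mono i : {homo (fun t => cview (loc (r t) i)) : t t' / (t <= t')%N}.
Proof.
apply: (@homo_leq _ _ (fun a b => a <= b)%N) => [//|b a c|t]; first exact: leq_trans.
by case: (step_mono i (run_step t)) => /andP[].
Qed.

Lemma run_crashed_mono i t t' :
  (t <= t')%N -> crashed (loc (r t) i) -> crashed (loc (r t') i).
Proof.
apply: (homo_leq_impl (fun t => crashed (loc (r t) i))) => {}t.
by case: (step_mono i (run_step t)).
Qed.

Lemma run_uninstalled_mono i k t t' :
  (t <= t')%N -> uninstalled (loc (r t) i) k -> uninstalled (loc (r t') i) k.
Proof.
apply: (homo_leq_impl (fun t => uninstalled (loc (r t) i) k)) => {}t.
by case: (step_mono i (run_step t)) => _ _ /(_ k).
Qed.

Lemma run_rcvd_mono q p m t t' :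
  (t <= t')%N -> rcvd (r t) q p m -> rcvd (r t') q p m.
Proof.
apply: (homo_leq_impl (fun t => rcvd (r t) q p m)) => {}t.
by case: (step_mono q (run_step t)) => _ _ _ /(_ q p m).
Qed.

Lemma run_view_succ i v t T :
  (cview (loc (r t) i) <= v)%N -> (v < cview (loc (r T) i))%N ->
  exists t', (t <= t')%N /\ cview (loc (r t') i) = v.+1.
Proof.
move=> tv vT; apply: (@nat_succ_hit (fun t => cview (loc (r t) i)) t T).
- by move=> t'; case: (step_mono i (run_step t')) => /andP[].
- by rewrite leqNgt; apply/negP => /ltnW /(run_cview_mono i); lia.
- by rewrite tv vT.
Qed.

Definition weakly_fair (l : label n) : Prop := forall t,
  (forall t', (t <= t')%N -> enabled w (r t') l) -> exists t', (t <= t')%N /\ lab t' = l.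

Lemma weakly_fair_progress l (P : nat -> Prop) T : weakly_fair l ->
  (forall t, (T <= t)%N -> ~ P t -> enabled w (r t) l) ->
  (forall t, (T <= t)%N -> ~ P t -> lab t = l -> P t.+1) ->
  exists t, (T <= t)%N /\ P t.
Proof.
move=> fair en fire; apply: contrapT => never.
have notP t : (T <= t)%N -> ~ P t by move=> Tt Pt; apply: never; exists t.
have [t [Tt lt]] := fair T (fun t Tt => en t Tt (notP t Tt)).
exact: notP (leqW Tt) (fire t Tt (notP t Tt) lt).
Qed.

Hypothesis run_inv : forall t, view_inv (r t).

Lemma change_view_broadcast t s v j :
  cview (loc (r t) j) = v -> requests r lab t s v ->
  forall k, (k < v.+1)%N -> exists p T, forall q, net (r T) p q (ChangeView k.+1).
Proof.
move=> jv [lt sv] k; rewrite ltnS leq_eqVlt => /predU1P[->|kv].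
  by exists s, t.+1 => q; have := run_step t; rewrite lt => -[_ [_ ->]]; right; rewrite sv.
by exists j, t; apply: (change_view_sent (run_inv t)); left; rewrite jv.
Qed.

Hypothesis reliable : forall t p q m,
  correct r q -> net (r t) p q m -> exists t', rcvd (r t') q p m.
Hypothesis fair_uninstall : forall s, correct r s -> weakly_fair (Uninstall s).
Hypothesis fair_install : forall s, correct r s -> weakly_fair (Install s).

Lemma eventually_uninstalled q p k T :
  correct r q -> (k <= cview (loc (r T) q))%N -> rcvd (r T) q p (ChangeView k.+1) ->
  exists t, (T <= t)%N /\ uninstalled (loc (r t) q) k.
Proof.
move=> cq kT rT.
have at_view t : (T <= t)%N -> ~ uninstalled (loc (r t) q) k ->
    cview (loc (r t) q) = k /\ ~~ uninst (loc (r t) q).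
  move=> Tt not_un; have kt := leq_trans kT (run_cview_mono q Tt).
  have ck : cview (loc (r t) q) = k.
    by apply/eqP; rewrite eqn_leq kt andbT leqNgt; apply/negP => kc; apply: not_un; left.
  by split=> //; apply/negP => u; apply: not_un; right.
apply: (weakly_fair_progress (fair_uninstall cq)) => t Tt /(at_view t Tt) [ck uk].
  by apply: (uninstall_enabled (cq t) uk); rewrite ck; apply: run_rcvd_mono Tt rT.
move=> lt; have := run_step t; rewrite lt => -[_ [_ [_ ->]]].
by rewrite /uninstalled /= /upd_loc eqxx /= ck; right.
Qed.

Lemma eventually_next_view q k T (Q : {set 'I_n}) :
  correct r q -> uninstalled (loc (r T) q) k ->
  (forall i, i \in Q -> exists y, rcvd (r T) q i (StateUpdate y k (w k i))) ->
  weighted_majority w k Q -> exists t, (T <= t)%N /\ (k < cview (loc (r t) q))%N.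
Proof.
move=> cq unT su_rcvd maj.
have at_view t : (T <= t)%N -> ~ (k < cview (loc (r t) q))%N ->
    cview (loc (r t) q) = k /\ uninst (loc (r t) q).
  move=> Tt /negP; rewrite -leqNgt => ck.
  by case: (run_uninstalled_mono Tt unT) => [|[-> ->]] //; rewrite ltnNge ck.
apply: (weakly_fair_progress (fair_install cq)) => t Tt /(at_view t Tt) [ck uk].
  apply: (install_enabled (Q := Q) (run_inv t) (cq t) uk); rewrite ck //.
  by move=> i /su_rcvd [y ry]; exists y; apply: run_rcvd_mono Tt ry.
move=> lt; have := run_step t; rewrite lt => -[_ [_ [? [? [? [_ [_ [_ [_ ->]]]]]]]]].
by rewrite /= /upd_loc eqxx /= ck.
Qed.

Definition correct_set : {set 'I_n} := [set i | `[< correct r i >]].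

Lemma correct_set_card f :
  (forall t, #|[set i | crashed (loc (r t) i)]| <= f)%N -> (n - f <= #|correct_set|)%N.
Proof.
move=> crash_bound.
have faulty_crash i : ~ correct r i -> exists t, crashed (loc (r t) i).
  by move=> /existsNP [t /negP/negPn]; exists t.
have [T crashedT] :=
  eventually_forall _ _ _ (fun i t t' => @run_crashed_mono i t t') faulty_crash.
have : ~: correct_set \subset [set i | crashed (loc (r T) i)].
  by apply/subsetP => i; rewrite !inE => /asboolPn /crashedT.
move/subset_leq_card; have := crash_bound T; have := cardsC correct_set.
rewrite card_ord leq_subLR => /esym/eq_leq/leq_trans le_n le_f le_c; apply: le_n.
by rewrite addnC leq_add2r (leq_trans le_c le_f).
Qed.

Hypothesis correct_majority : forall k, weighted_majority w k correct_set.

Lemma view_change_round k p T0 :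
  (forall q, net (r T0) p q (ChangeView k.+1)) ->
  (forall q, correct r q -> exists t, (k <= cview (loc (r t) q))%N) ->
  forall q, correct r q -> exists t, (k < cview (loc (r t) q))%N.
Proof.
move=> cv_sent reach_k q cq.
have uninstalled_k i : correct r i -> exists t, uninstalled (loc (r t) i) k.
  move=> ci; have [t1 rcv] := reliable ci (cv_sent i).
  have [t2 kt2] := reach_k i ci.
  have [t [_ un]] := eventually_uninstalled ci
    (leq_trans kt2 (run_cview_mono i (leq_maxr t1 t2)))
    (run_rcvd_mono (leq_maxl t1 t2) rcv).
  by exists t.
have su_rcvd i : correct r i -> exists t y, rcvd (r t) q i (StateUpdate y k (w k i)).
  move=> ci; have [t ui] := uninstalled_k i ci.
  have [y sent] := state_update_sent (run_inv t) ui.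
  have [t' ry] := reliable cq (sent q).
  by exists t', y.
have [|Ts all_su] := eventually_forall _ _ _ _ su_rcvd.
  by move=> i t t' tt' [y ry]; exists y; apply: run_rcvd_mono tt' ry.
have [Tq uq] := uninstalled_k q cq.
have [|t [_ kt]] := eventually_next_view (T := maxn Ts Tq) (Q := correct_set) cq
  (run_uninstalled_mono (leq_maxr Ts Tq) uq) _ (correct_majority k).
  move=> i; rewrite inE => /asboolP /all_su [y ry].
  by exists y; apply: run_rcvd_mono (leq_maxl Ts Tq) ry.
by exists t.
Qed.

Lemma correct_reach_view v :
  (forall k, (k < v)%N -> exists p T, forall q, net (r T) p q (ChangeView k.+1)) ->
  forall q, correct r q -> exists t, (v <= cview (loc (r t) q))%N.
Proof.
elim: v => [_ q _|v IH sent]; first by exists 0%N.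
have [p [T cvT]] := sent v (ltnSn v).
apply: (view_change_round cvT) => q cq; apply: IH => // k kv.
by apply: sent; rewrite ltnS ltnW.
Qed.

End Run.

End ViewChanger.

Theorem lemma5 (R : realFieldType) (Val : Type) (val0 : Val) (n f : nat)
  (w : nat -> 'I_n -> R)
  (Hnf : (2 * f + 1 <= n)%N)
  (Hw : weights_ok f w)
  (r : nat -> gstate Val R n) (lab : nat -> label n)
  (Hrun : admissible_run val0 f w r lab)
  (t : nat) (s : 'I_n) (v : nat)
  (Hlast : lastview_is (r t) v)
  (Hs : correct r s)
  (Hreq : requests r lab t s v) :
  exists Q : {set 'I_n},
    s \in Q /\ (forall i, i \in Q -> correct r i) /\
    weighted_majority w v Q /\
    (forall i, i \in Q -> exists t', (t <= t')%N /\ cview (loc (r t') i) = v.+1).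
Proof.
case: Hrun => [r0 [run_step [crash_bound [reliable [fair_un fair_in]]]]].
have run_inv := view_inv_run r0 run_step.
have [[j jv] below_v] := Hlast.
have correct_maj k : weighted_majority w k (correct_set r).
  apply: weighted_majority_of_card (correct_set_card run_step crash_bound) => [|i].
    by lia.
  by case: (proj1 Hw k i).
exists (correct_set r); split; [|split; [|split]].
- by rewrite inE; apply/asboolP.
- by move=> i; rewrite inE => /asboolP.
- exact: correct_maj.
- move=> i; rewrite inE => /asboolP ci.
  have [T vT] := correct_reach_view run_step run_inv reliable fair_un fair_in correct_maj
    (change_view_broadcast run_step run_inv jv Hreq) ci.
  exact: (run_view_succ run_step (below_v i) vT).
Qed.
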